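(* Let $\mathcal P=\mathcal P(V,R)$ and $\mathcal Q=\mathcal P(W,S)$ be binary quadratic operads over a field $\Bbbk$ with $\dim V,\dim W<\infty$. Let $(e_i)_{i\in I}$ be a basis of $V$, $(f_j)_{j\in J}$ a basis of $W$, and $(e_i^\vee)_{i\in I}$ the dual basis of $V^\vee$. Write the operations of $\mathcal P^!$ as $e_i^\vee=x_1\circ^i x_2$, those of $\mathcal Q$ as $f_j=x_1*_j x_2$, and the generating operations $1_-\otimes e_i\otimes f_j\in\Bbbk_-\otimes V\otimes W$ of $\mathcal P\bullet\mathcal Q$ as $x_1*_{i,j}x_2$. Let $A$ be a vector space with bilinear operations $(\cdot*_{i,j}\cdot)$, $i\in I$, $j\in J$. For a $\mathcal P^!$-algebra $B$ equip $B\otimes A$ with the operations $$(p\otimes a)*_j(q\otimes b)=\sum_{i\in I}(p\circ^i q)\otimes(a*_{i,j}b),\quad p,q\in B,\ a,b\in A,\ j\in J.$$ Then $A$ is a $(\mathcal P\bullet\mathcal Q)$-algebra if and only if for every $\mathcal P^!$-algebra $B$ the space $B\otimes A$ with these operations is a $\mathcal Q$-algebra.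
   Context: A binary quadratic operad $\mathcal P(V,R)$ is generated by an $S_2$-module $V$ of binary operations subject to relations $R\subseteq\mathcal F_V(3)$, $\mathcal F_V$ the free operad. $\Bbbk_-$ is the sign representation of $S_2$, $V^\vee=V^*\otimes\Bbbk_-$, and $\mathcal P^!=\mathcal P(V^\vee,R^\perp)$ is the Koszul dual operad. $\mathcal P\bullet\mathcal Q$ is the Manin black product (Ginzburg–Kapranov): the binary quadratic operad generated by $\Bbbk_-\otimes V\otimes W$ whose relations are the image of $\Bbbk_-\otimes R\otimes S$ under the natural projection $\Bbbk_-\otimes\mathcal F_V(3)\otimes\mathcal F_W(3)\to\mathcal F_{\Bbbk_-\otimes V\otimes W}(3)$ (dual to the embedding of $\mathrm{Ind}_{S_2}^{S_3}((V^\vee\otimes W^\vee)\otimes(V^\vee\otimes W^\vee))$ into $\mathcal F_V(3)^\vee\otimes\mathcal F_W(3)^\vee$). *)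

From HB Require Import structures.
From mathcomp Require Import all_boot all_algebra all_fingroup.
Set Implicit Arguments.
Unset Strict Implicit.
Unset Printing Implicit Defensive.
Import GRing.Theory.
Local Open Scope ring_scope.

Definition c3 (k : 'I_3) (d : nat) : 'I_3 := inord ((k + d) %% 3)%N.

(* An S_2-module structure on K^I (basis e_i) is an involution tau, acting
   on columns: sigma . e_i = \sum_k tau k i e_k. *)
Definition involutive_mx (K : fieldType) (I : finType) (tau : I -> I -> K) :=
  forall i j, \sum_(k : I) tau i k * tau k j = (i == j)%:R.

(* F_V(3) = Ind_{S_2}^{S_3}(V (x) V): coordinates c k i j of the element
   \sum c k i j . e_i(e_j(x_{k+1}, x_{k+2}), x_k)   (indices mod 3). *)
Definition F3 (K : Type) (I : Type) := 'I_3 -> I -> I -> K.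

(* The action of s in S_3 on F_V(3) (relabelling x_a |-> x_{s a}). *)
Definition act3 (K : fieldType) (I : finType) (tau : I -> I -> K)
  (s : 'S_3) (c : F3 K I) : F3 K I :=
  fun k' i l => let k := (s^-1)%g k' in
    if s (c3 k 1) == c3 k' 1 then c k i l
    else \sum_(j : I) tau l j * c k i j.

Definition is_relation_space (K : fieldType) (I : finType) (tau : I -> I -> K)
  (R : F3 K I -> Prop) : Prop :=
  [/\ R (fun _ _ _ => 0),
      (forall a c d, R c -> R d -> R (fun k i j => a * c k i j + d k i j)) &
      (forall s c, R c -> R (act3 tau s c))].

Definition bilinear_op (K : fieldType) (X : lmodType K) (I : Type)
  (op : I -> X -> X -> X) : Prop :=
  forall i,
    (forall y a u v, op i (a *: u + v) y = a *: op i u y + op i v y) /\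
    (forall x a u v, op i x (a *: u + v) = a *: op i x u + op i x v).

(* (sigma . e_i)(x, y) = e_i(y, x) *)
Definition equivariant (K : fieldType) (I : finType) (tau : I -> I -> K)
  (X : lmodType K) (op : I -> X -> X -> X) : Prop :=
  forall i x y, op i y x = \sum_(k : I) tau k i *: op k x y.

Definition eval3 (K : fieldType) (I : finType) (X : lmodType K)
  (op : I -> X -> X -> X) (c : F3 K I) (x : 'I_3 -> X) : X :=
  \sum_(k < 3) \sum_(i : I) \sum_(j : I)
     c k i j *: op i (op j (x (c3 k 1)) (x (c3 k 2))) (x k).

Definition is_algebra (K : fieldType) (I : finType) (tau : I -> I -> K)
  (R : F3 K I -> Prop) (X : lmodType K) (op : I -> X -> X -> X) : Prop :=
  [/\ bilinear_op op, equivariant tau op &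
      forall c, R c -> forall x, eval3 op c x = 0].

(* Koszul dual: V^vee = V^* (x) k_-, in the dual basis e_i^vee;
   sigma . e_i^vee = - \sum_k tau i k e_k^vee. *)
Definition dual_tau (K : fieldType) (I : Type) (tau : I -> I -> K) :
  I -> I -> K := fun k i => - tau i k.

Definition perp (K : fieldType) (I : finType) (R : F3 K I -> Prop) :
  F3 K I -> Prop :=
  fun d => forall c, R c ->
    \sum_(k < 3) \sum_(i : I) \sum_(j : I) c k i j * d k i j = 0.

(* Black product: generators k_- (x) V (x) W with basis 1_- (x) e_i (x) f_j. *)
Definition black_tau (K : fieldType) (I J : Type) (tauV : I -> I -> K)
  (tauW : J -> J -> K) : I * J -> I * J -> K :=
  fun p q => - (tauV p.1 q.1 * tauW p.2 q.2).

(* Relations: image of k_- (x) R (x) S under the natural projection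
   (mu o_k nu) (x) (mu' o_k nu') |-> (mu (x) mu') o_k (nu (x) nu'). *)
Definition black_rel (K : fieldType) (I J : finType)
  (R : F3 K I -> Prop) (S : F3 K J -> Prop) : F3 K (I * J) -> Prop :=
  fun d => exists r s, [/\ R r, S s &
     forall k p q, d k p q = r k p.1 q.1 * s k p.2 q.2].

(* An element of B (x) A is represented by a finite list of pure tensors
   [(b_1,a_1); ...] standing for \sum b_t (x) a_t.  Such a sum is zero in
   B (x) A iff \sum psi(b_t) a_t = 0 for every linear form psi on B. *)
Definition tens (K : fieldType) (B A : lmodType K) := seq (B * A).

Definition lin_form (K : fieldType) (B : lmodType K) (psi : B -> K) : Prop :=
  forall a u v, psi (a *: u + v) = a * psi u + psi v.

Definition tnull (K : fieldType) (B A : lmodType K) (t : tens B A) : Prop :=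
  forall psi : B -> K, lin_form psi -> \sum_(x <- t) psi x.1 *: x.2 = 0.

Definition tscale (K : fieldType) (B A : lmodType K) (a : K) (t : tens B A) :
  tens B A := [seq (a *: x.1, x.2) | x <- t].

Definition teq (K : fieldType) (B A : lmodType K) (t1 t2 : tens B A) : Prop :=
  tnull (t1 ++ tscale (-1) t2).

Definition tmul (K : fieldType) (I J : finType) (B A : lmodType K)
  (opB : I -> B -> B -> B) (opA : I * J -> A -> A -> A) (j : J)
  (t1 t2 : tens B A) : tens B A :=
  flatten [seq [seq (opB i x.1 y.1, opA (i, j) x.2 y.2) | i <- enum I]
          | x <- t1, y <- t2].

Definition teval (K : fieldType) (J : finType) (B A : lmodType K)
  (op : J -> tens B A -> tens B A -> tens B A) (s : F3 K J)
  (t : 'I_3 -> tens B A) : tens B A :=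
  \big[cat/[::]]_(k < 3) \big[cat/[::]]_(j : J) \big[cat/[::]]_(j' : J)
     tscale (s k j j') (op j (op j' (t (c3 k 1)) (t (c3 k 2))) (t k)).

Definition is_tensor_Q_algebra (K : fieldType) (I J : finType)
  (tauW : J -> J -> K) (S : F3 K J -> Prop) (B A : lmodType K)
  (opB : I -> B -> B -> B) (opA : I * J -> A -> A -> A) : Prop :=
  (forall j t1 t2, teq (tmul opB opA j t2 t1)
      (\big[cat/[::]]_(l : J) tscale (tauW l j) (tmul opB opA l t1 t2))) /\
  (forall s, S s -> forall t, tnull (teval (tmul opB opA) s t)).

(* Contracting with a linear form psi on B maps B (x) A to A, and a tensor
   vanishes iff all its contractions do.  Contracting a relation s of Q,
   evaluated in B (x) A, gives the evaluation in A of the black-product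
   element r (x) s, where r k i i' = psi ((b_(k+1) o^i' b_(k+2)) o^i b_k)
   records cubic products in B.  Since B satisfies R^perp, r annihilates
   R^perp, so r lies in (R^perp)^perp = R and the relation holds in A.
   Conversely, for r in R, cut the multilinear part of the free P^!-algebra
   on three generators off at degree 3 and send its cubic part to a line by r.
   This is a P^!-algebra B_r, and testing B_r (x) A on the generators recovers
   the relation r (x) s in A; B_0 yields the equivariance of A. *)

From mathcomp Require Import all_boot all_algebra all_fingroup.
From mathcomp Require Import ring.
From Stdlib Require Import Classical FunctionalExtensionality.
Set Implicit Arguments.
Unset Strict Implicit.
Unset Printing Implicit Defensive.
Import GRing.Theory.
Local Open Scope ring_scope.

Section Annihilator.
Variables (K : fieldType) (n : nat) (R : 'rV[K]_n -> Prop).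
Hypothesis R0 : R 0.
Hypothesis R_lin : forall a u v, R u -> R v -> R (a *: u + v).

Let in_R (M : 'M[K]_n) := forall v : 'rV_n, (v <= M)%MS -> R v.

Let in_R_adds M u : in_R M -> R u -> in_R (M + u)%MS.
Proof.
move=> RM Ru v /sub_addsmxP[[w1 w2] /= ->].
have /sub_rVP[a ->] : (w2 *m u <= u)%MS by exact: submxMl.
by rewrite addrC; apply: R_lin => //; apply/RM/submxMl.
Qed.

(* [R] need not be decidable, so its span is reached classically, as a
   matrix of maximal rank among those whose row space lies in [R]. *)
Let in_R_rank_max :
  exists M, in_R M /\ forall M', in_R M' -> (\rank M' <= \rank M)%N.
Proof.
apply: NNPP => no_max.
suff /(_ n.+1)[M [_]] : forall m, exists M, in_R M /\ (m <= \rank M)%N.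
  by rewrite ltnNge rank_leq_col.
elim=> [|m [M [RM le_mM]]].
  by exists 0; split=> // v; rewrite submx0 => /eqP->.
apply: NNPP => no_bigger; apply: no_max; exists M; split=> // M' RM'.
rewrite leqNgt; apply/negP => lt_MM'; apply: no_bigger.
by exists M'; split=> //; apply: leq_ltn_trans lt_MM'.
Qed.

Lemma spanning_mx : exists M : 'M[K]_n,
  (forall v, (v <= M)%MS -> R v) /\ (forall u, R u -> (u <= M)%MS).
Proof.
have [M [RM M_max]] := in_R_rank_max.
exists M; split=> // u Ru; apply: contraT => uM.
suff: (\rank M < \rank (M + u)%MS)%N by rewrite ltnNge M_max //; exact: in_R_adds.
by apply: rank_ltmx; rewrite ltmxE addsmxSl addsmx_sub submx_refl /= uM.
Qed.

Lemma annihilator_annihilator v :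
  (forall w : 'cV_n, (forall u, R u -> u *m w = 0) -> v *m w = 0) -> R v.
Proof.
move=> v_ann; have [M [RM MR]] := spanning_mx.
apply: RM; rewrite submxE; apply/eqP/matrixP => i j; rewrite ord1 mxE.
have col_mulmx u : u *m col j (cokermx M) = col j (u *m cokermx M).
  by rewrite !colE mulmxA.
have /matrixP/(_ 0 0) : v *m col j (cokermx M) = 0.
  apply: v_ann => u /MR; rewrite submxE col_mulmx => /eqP->.
  by apply/matrixP => ? ?; rewrite !mxE.
by rewrite col_mulmx !mxE.
Qed.

End Annihilator.

Section F3Coordinates.
Variables (K : fieldType) (I : finType).
Local Notation n := #|{: 'I_3 * (I * I)}|.

Definition rowF3 (c : F3 K I) : 'rV[K]_n :=
  \row_x let: (k, (i, j)) := enum_val x in c k i j.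

Definition F3row (v : 'rV[K]_n) : F3 K I :=
  fun k i j => v 0 (enum_rank (k, (i, j))).

Lemma rowF3K : cancel rowF3 F3row.
Proof.
move=> c; do 3!apply: functional_extensionality => ?.
by rewrite /F3row mxE enum_rankK.
Qed.

Lemma F3rowK : cancel F3row rowF3.
Proof.
move=> v; apply/matrixP => i x; rewrite ord1 mxE.
by case: (enum_val x) (enum_valK x) => k [i' j] <-.
Qed.

Lemma F3rowD a u v :
  F3row (a *: u + v) = (fun k i j => a * F3row u k i j + F3row v k i j).
Proof. by do 3!apply: functional_extensionality => ?; rewrite /F3row !mxE. Qed.

Lemma pairing_rowF3 (c d : F3 K I) :
  \sum_(k < 3) \sum_(i : I) \sum_(j : I) c k i j * d k i j =
  (rowF3 c *m (rowF3 d)^T) 0 0.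
Proof.
rewrite mxE (reindex (@enum_rank ('I_3 * (I * I))%type)) /=; last first.
  by apply: onW_bij; apply: enum_rank_bij.
under eq_bigr do rewrite pair_bigA /=.
rewrite pair_bigA; apply: eq_bigr => -[k [i j]] _.
by rewrite !mxE enum_rankK.
Qed.

Lemma perp_perp (R : F3 K I -> Prop) :
  R (fun _ _ _ => 0) ->
  (forall a c d, R c -> R d -> R (fun k i j => a * c k i j + d k i j)) ->
  forall r, perp (perp R) r -> R r.
Proof.
move=> R0 R_lin r r_pp; rewrite -[r]rowF3K.
apply: (@annihilator_annihilator _ _ (R \o F3row)) => [|a u v Ru Rv|w w_ann] /=.
- suff -> : F3row 0 = (fun _ _ _ => 0) by [].
  by do 3!apply: functional_extensionality => ?; rewrite /F3row mxE.
- by rewrite F3rowD; apply: R_lin.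
have perp_w : perp R (F3row w^T).
  move=> c Rc; rewrite pairing_rowF3 F3rowK trmxK.
  by rewrite w_ann ?mxE //= rowF3K.
apply/matrixP => i j; rewrite !ord1 [RHS]mxE -[w]trmxK -(F3rowK w^T).
rewrite -pairing_rowF3 -[RHS](r_pp _ perp_w).
by do 3!apply: eq_bigr => ? _; rewrite mulrC.
Qed.

End F3Coordinates.

Section LinearForms.
Variables (K : fieldType) (B : lmodType K) (psi : B -> K).
Hypothesis psi_lin : lin_form psi.

Lemma lin_form0 : psi 0 = 0.
Proof.
have := psi_lin 1 0 0; rewrite scale1r addr0 mul1r => psi00.
by apply: (addrI (psi 0)); rewrite -psi00 addr0.
Qed.

Lemma lin_formZ a u : psi (a *: u) = a * psi u.
Proof. by rewrite -[a *: u]addr0 psi_lin lin_form0 addr0. Qed.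

Lemma lin_formD u v : psi (u + v) = psi u + psi v.
Proof. by rewrite -[u]scale1r psi_lin mul1r scale1r. Qed.

Lemma lin_form_sum (T : Type) (r : seq T) (F : T -> B) :
  psi (\sum_(x <- r) F x) = \sum_(x <- r) psi (F x).
Proof. exact: (big_morph psi lin_formD lin_form0). Qed.

Lemma lin_form_sumZ (T : Type) (r : seq T) (a : T -> K) (F : T -> B) :
  psi (\sum_(x <- r) a x *: F x) = \sum_(x <- r) a x * psi (F x).
Proof. by rewrite lin_form_sum; apply: eq_bigr => x _; apply: lin_formZ. Qed.

Variable A : lmodType K.

Definition contract (t : tens B A) : A := \sum_(x <- t) psi x.1 *: x.2.

Lemma contract_cat t1 t2 : contract (t1 ++ t2) = contract t1 + contract t2.
Proof. exact: big_cat. Qed.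

Lemma contract_tscale a t : contract (tscale a t) = a *: contract t.
Proof.
rewrite /contract big_map scaler_sumr; apply: eq_bigr => x _ /=.
by rewrite lin_formZ scalerA.
Qed.

Lemma contract_bigcat (T : Type) (r : seq T) (F : T -> tens B A) :
  contract (\big[cat/[::]]_(x <- r) F x) = \sum_(x <- r) contract (F x).
Proof. exact: (big_morph contract contract_cat (big_nil _ _ _ _)). Qed.

End LinearForms.

Lemma teqP (K : fieldType) (B A : lmodType K) (t1 t2 : tens B A) :
  teq t1 t2 <-> forall psi, lin_form psi -> contract psi t1 = contract psi t2.
Proof.
have contract_diff psi : lin_form psi ->
    contract psi (t1 ++ tscale (-1) t2) = contract psi t1 - contract psi t2.
  by move=> psi_lin; rewrite contract_cat contract_tscale // scaleN1r.
split=> eq_t psi psi_lin.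
  by apply/eqP; rewrite -subr_eq0 -contract_diff //; apply/eqP/eq_t.
by rewrite -/(contract psi _) contract_diff // eq_t // subrr.
Qed.

Lemma big_tmul (K : fieldType) (I J : finType) (B A : lmodType K) (V : nmodType)
  (opB : I -> B -> B -> B) (opA : I * J -> A -> A -> A) j t1 t2 (G : B * A -> V) :
  \sum_(w <- tmul opB opA j t1 t2) G w =
  \sum_(x <- t1) \sum_(y <- t2) \sum_(i : I) G (opB i x.1 y.1, opA (i, j) x.2 y.2).
Proof.
rewrite big_flatten /= big_allpairs_dep /=.
by do 2!apply: eq_bigr => ? _; rewrite big_map big_enum.
Qed.

Lemma c3_val (k : 'I_3) d : val (c3 k d) = ((k + d) %% 3)%N.
Proof. by rewrite /c3 /= inordK // ltn_pmod. Qed.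

Lemma c3_inord n d : (n < 3)%N -> c3 (inord n) d = inord ((n + d) %% 3).
Proof. by move=> lt_n3; apply: val_inj; rewrite c3_val /= !inordK // ltn_pmod. Qed.

Lemma ord3P (k : 'I_3) : [\/ k = inord 0, k = inord 1 | k = inord 2].
Proof.
by case: k => [[|[|[|//]]] lt_k3]; [constructor 1 | constructor 2 | constructor 3];
  apply: val_inj; rewrite /= inordK.
Qed.

Definition pick3 (T : Type) (x0 x1 x2 : T) (m : 'I_3) : T :=
  nth x0 [:: x0; x1; x2] m.

Lemma pick3_ord (T : Type) (f : 'I_3 -> T) :
  pick3 (f (inord 0)) (f (inord 1)) (f (inord 2)) =1 f.
Proof. by move=> m; case: (ord3P m) => ->; rewrite /pick3 inordK. Qed.

Lemma big_cyclic3 (T : Type) (V : nmodType) (t : 'I_3 -> seq T)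
    (F : 'I_3 -> T -> T -> T -> V) :
  \sum_(k < 3) \sum_(x <- t (c3 k 1)) \sum_(y <- t (c3 k 2)) \sum_(z <- t k)
    F k x y z =
  \sum_(x0 <- t (inord 0)) \sum_(x1 <- t (inord 1)) \sum_(x2 <- t (inord 2))
    \sum_(k < 3) let X := pick3 x0 x1 x2 in F k (X (c3 k 1)) (X (c3 k 2)) (X k).
Proof.
under [RHS]eq_bigr do under eq_bigr do rewrite exchange_big.
under [RHS]eq_bigr do rewrite exchange_big.
rewrite [RHS]exchange_big; apply: eq_bigr => k _ /=.
case: (ord3P k) => ->; rewrite /pick3 !c3_inord // !inordK //=.
- by under eq_bigr do rewrite exchange_big; rewrite exchange_big.
- by rewrite exchange_big; apply: eq_bigr => x0 _; rewrite exchange_big.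
Qed.

Definition black3 (K : fieldType) (I J : Type) (r : F3 K I) (s : F3 K J) :
  F3 K (I * J) := fun k p q => r k p.1 q.1 * s k p.2 q.2.

Lemma sum_kronecker (K : fieldType) (I : finType) (p : I -> K) i :
  \sum_k (i == k)%:R * p k = p i.
Proof.
rewrite (bigD1 i) //= eqxx mul1r big1 ?addr0 // => k /negbTE nk.
by rewrite eq_sym nk mul0r.
Qed.

Lemma sum_kroneckerZ (K : fieldType) (I : finType) (V : lmodType K) (f : I -> V) m :
  \sum_i (m == i)%:R *: f i = f m.
Proof.
rewrite (bigD1 m) //= eqxx scale1r big1 ?addr0 // => i /negbTE ni.
by rewrite eq_sym ni scale0r.
Qed.

Section Forward.
Variables (K : fieldType) (I J : finType) (tauV : I -> I -> K) (tauW : J -> J -> K).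
Variables (B A : lmodType K) (opB : I -> B -> B -> B) (opA : I * J -> A -> A -> A).

Section Equivariance.
Hypothesis hV : involutive_mx tauV.
Hypothesis eqB : equivariant (dual_tau tauV) opB.
Hypothesis eqA : equivariant (black_tau tauV tauW) opA.

Lemma sum_dual_tau_black_tau (p : I -> K) m (w : K) :
  \sum_i (\sum_k dual_tau tauV k i * p k) * - (tauV m i * w) = w * p m.
Proof.
transitivity (\sum_i \sum_k (tauV m i * tauV i k) * p k * w).
  apply: eq_bigr => i _; rewrite mulr_suml; apply: eq_bigr => k _.
  rewrite /dual_tau; ring.
rewrite exchange_big /= -(sum_kronecker p m) mulr_sumr; apply: eq_bigr => k _.
by rewrite -hV mulr_suml mulr_sumr; apply: eq_bigr => i _; ring.
Qed.

Lemma contract_tmul_swap psi (psi_lin : lin_form psi) b b' a a' j :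
  \sum_i psi (opB i b' b) *: opA (i, j) a' a =
  \sum_l tauW l j *: \sum_i psi (opB i b b') *: opA (i, l) a a'.
Proof.
under eq_bigr do rewrite eqB eqA (lin_form_sumZ psi_lin) scaler_sumr.
under eq_bigr do under eq_bigr do rewrite scalerA.
rewrite exchange_big /=.
under eq_bigr do rewrite -scaler_suml.
under [RHS]eq_bigr do rewrite scaler_sumr.
rewrite [RHS]exchange_big /= [RHS]pair_bigA /=.
apply: eq_bigr => -[m l] _ /=.
by rewrite scalerA /black_tau /= sum_dual_tau_black_tau.
Qed.

Lemma tensor_equivariant j t1 t2 :
  teq (tmul opB opA j t2 t1)
      (\big[cat/[::]]_(l : J) tscale (tauW l j) (tmul opB opA l t1 t2)).
Proof.
apply/teqP => psi psi_lin; rewrite contract_bigcat.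
under [RHS]eq_bigr do
  rewrite (contract_tscale psi_lin) /contract big_tmul scaler_sumr.
rewrite /contract big_tmul exchange_big /= [RHS]exchange_big /=.
apply: eq_bigr => x _.
under [RHS]eq_bigr do rewrite scaler_sumr.
rewrite [RHS]exchange_big /=; apply: eq_bigr => y _.
exact: contract_tmul_swap.
Qed.

End Equivariance.

Definition coef3 (psi : B -> K) (X : 'I_3 -> B) : F3 K I :=
  fun k i i' => psi (opB i (opB i' (X (c3 k 1)) (X (c3 k 2))) (X k)).

Lemma lin_form_eval3 psi (psi_lin : lin_form psi) (c : F3 K I) X :
  psi (eval3 opB c X) =
  \sum_(k < 3) \sum_(i : I) \sum_(i' : I) c k i i' * coef3 psi X k i i'.
Proof.
rewrite /eval3 (lin_form_sum psi_lin); apply: eq_bigr => k _.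
rewrite (lin_form_sum psi_lin); apply: eq_bigr => i _.
rewrite (lin_form_sum psi_lin); apply: eq_bigr => i' _.
exact: lin_formZ.
Qed.

Lemma contract_teval psi (psi_lin : lin_form psi) s t :
  contract psi (teval (tmul opB opA) s t) =
  \sum_(x0 <- t (inord 0)) \sum_(x1 <- t (inord 1)) \sum_(x2 <- t (inord 2))
    let X := pick3 x0 x1 x2 in
    eval3 opA (black3 (coef3 psi (fun m => (X m).1)) s) (fun m => (X m).2).
Proof.
pose G k (x y z : B * A) := \sum_(p : I * J) \sum_(q : I * J)
  (psi (opB p.1 (opB q.1 x.1 y.1) z.1) * s k p.2 q.2) *: opA p (opA q x.2 y.2) z.2.
rewrite -[RHS](big_cyclic3 t G) /teval contract_bigcat; apply: eq_bigr => k _.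
rewrite contract_bigcat; under eq_bigr do rewrite contract_bigcat; under eq_bigr do
  under eq_bigr do rewrite (contract_tscale psi_lin) /contract big_tmul big_tmul.
have pull_out (T : Type) (r : seq T) (F : J -> J -> T -> A) :
    \sum_j \sum_j' s k j j' *: \sum_(x <- r) F j j' x =
    \sum_(x <- r) \sum_j \sum_j' s k j j' *: F j j' x.
  under eq_bigr do under eq_bigr do rewrite scaler_sumr.
  by under eq_bigr do rewrite exchange_big; rewrite exchange_big.
rewrite pull_out; apply: eq_bigr => x _; rewrite pull_out; apply: eq_bigr => y _.
under eq_bigr do under eq_bigr do rewrite exchange_big.
rewrite pull_out; apply: eq_bigr => z _; rewrite /G.
under eq_bigr do under eq_bigr do
  (rewrite scaler_sumr; under eq_bigr do rewrite scaler_sumr).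
under eq_bigr do rewrite exchange_big.
under eq_bigr do under eq_bigr do rewrite exchange_big.
under eq_bigr do rewrite exchange_big.
rewrite exchange_big pair_bigA; apply: eq_bigr => -[i j] _.
rewrite pair_bigA; apply: eq_bigr => -[i' j'] _ /=.
by rewrite scalerA mulrC.
Qed.

Section Relations.
Variables (R : F3 K I -> Prop) (S : F3 K J -> Prop).
Hypothesis R_perp_perp : forall r, perp (perp R) r -> R r.
Hypothesis relB : forall d, perp R d -> forall b, eval3 opB d b = 0.
Hypothesis relA : forall d, black_rel R S d -> forall a, eval3 opA d a = 0.

Lemma coef3_in_R psi (psi_lin : lin_form psi) X : R (coef3 psi X).
Proof.
apply: R_perp_perp => d perp_d.
by rewrite -(lin_form_eval3 psi_lin) relB ?(lin_form0 psi_lin).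
Qed.

Lemma tensor_relations s : S s -> forall t, tnull (teval (tmul opB opA) s t).
Proof.
move=> Ss t psi psi_lin; rewrite -/(contract psi _) (contract_teval psi_lin).
rewrite big1_seq // => x0 _; rewrite big1_seq // => x1 _.
rewrite big1_seq // => x2 _ /=; apply: relA.
exists (coef3 psi (fun m => (pick3 x0 x1 x2 m).1)), s.
by split=> //; apply: coef3_in_R.
Qed.

End Relations.

End Forward.

Lemma c3_inj (k : 'I_3) : injective (fun t : 'I_3 => c3 k t).
Proof.
move=> a b /(congr1 val) /eqP; rewrite !c3_val => eq_ab; apply: val_inj; apply/eqP.
by move: eq_ab; case: k a b => [[|[|[|//]]] ?] [[|[|[|//]]] ?] [[|[|[|//]]] ?].
Qed.

Lemma c3_rot_inj (t : 'I_3) : injective (fun a : 'I_3 => c3 a (2 * t)).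
Proof.
move=> a b /(congr1 val) /eqP; rewrite !c3_val => eq_ab; apply: val_inj; apply/eqP.
by move: eq_ab; case: t a b => [[|[|[|//]]] ?] [[|[|[|//]]] ?] [[|[|[|//]]] ?].
Qed.

Lemma c3_refl_inj (t : 'I_3) : injective (fun a : 'I_3 => c3 t (2 * a)).
Proof.
move=> a b /(congr1 val) /eqP; rewrite !c3_val => eq_ab; apply: val_inj; apply/eqP.
by move: eq_ab; case: t a b => [[|[|[|//]]] ?] [[|[|[|//]]] ?] [[|[|[|//]]] ?].
Qed.

Lemma c3_21 (k : 'I_3) : (c3 k 2 == c3 k 1) = false.
Proof. by rewrite -val_eqE !c3_val; case: k => [[|[|[|//]]] ?]. Qed.

Definition rot3 (t : 'I_3) : 'S_3 := perm (@c3_rot_inj t).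
Definition refl3 (t : 'I_3) : 'S_3 := perm (@c3_refl_inj t).

Lemma rot3V t k : ((rot3 t)^-1)%g k = c3 k t.
Proof.
apply: (@perm_inj _ (rot3 t)); rewrite permKV permE; apply: val_inj.
by rewrite !c3_val; case: t k => [[|[|[|//]]] ?] [[|[|[|//]]] ?].
Qed.

Lemma refl3V t k : ((refl3 t)^-1)%g k = c3 t (2 * k).
Proof.
apply: (@perm_inj _ (refl3 t)); rewrite permKV permE; apply: val_inj.
by rewrite !c3_val; case: t k => [[|[|[|//]]] ?] [[|[|[|//]]] ?].
Qed.

Section Act3.
Variables (K : fieldType) (I : finType) (tau : I -> I -> K).

Lemma act3_rot3 (c : F3 K I) t k i j : act3 tau (rot3 t) c k i j = c (c3 k t) i j.
Proof.
rewrite /act3 rot3V permE.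
suff -> : c3 (c3 (c3 k t) 1) (2 * t) == c3 k 1 by [].
by rewrite -val_eqE !c3_val; case: t k => [[|[|[|//]]] ?] [[|[|[|//]]] ?].
Qed.

Lemma act3_refl3 (c : F3 K I) t k i j :
  act3 tau (refl3 t) c k i j = \sum_l tau j l * c (c3 t (2 * k)) i l.
Proof.
rewrite /act3 refl3V permE.
suff /negbTE -> : c3 t (2 * c3 (c3 t (2 * k)) 1) != c3 k 1 by [].
by rewrite -val_eqE !c3_val; case: t k => [[|[|[|//]]] ?] [[|[|[|//]]] ?].
Qed.

End Act3.

Section TestAlgebra.
Variables (K : fieldType) (I : finType) (tauV : I -> I -> K).
Hypothesis hV : involutive_mx tauV.
Variable r : F3 K I.

Local Notation tau' := (dual_tau tauV).

Lemma dual_tau_involutive : involutive_mx tau'.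
Proof.
move=> m i; rewrite eq_sym -hV; apply: eq_bigr => n _.
by rewrite /dual_tau mulrNN mulrC.
Qed.

Lemma sum_dual_tau2 (p : I -> K) i :
  \sum_n tau' n i * \sum_m tau' m n * p m = p i.
Proof.
transitivity (\sum_m (\sum_n tau' m n * tau' n i) * p m).
  under eq_bigr do rewrite mulr_sumr.
  rewrite exchange_big /=; apply: eq_bigr => m _.
  by rewrite mulr_suml; apply: eq_bigr => n _; ring.
rewrite -[RHS]sum_kronecker; apply: eq_bigr => m _.
by rewrite dual_tau_involutive eq_sym.
Qed.

(* The basis of B_r: generators [gen a], quadratic elements [quad k m]
   standing for e_m^vee(g_(k+1), g_(k+2)), and [top], onto which r maps the
   cubic part F_(V^vee)(3)/R^perp. *)
Definition test_basis := option ('I_3 + 'I_3 * I)%type.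
Definition gen (a : 'I_3) : test_basis := Some (inl a).
Definition quad (k : 'I_3) (m : I) : test_basis := Some (inr (k, m)).
Definition top : test_basis := None.

Definition test_space := {ffun test_basis -> K^o}.

Definition test_op (i : I) (x y : test_space) : test_space :=
  [ffun w => match w return K^o with
  | Some (inl _) => 0
  | Some (inr (k, m)) =>
      x (gen (c3 k 1)) * y (gen (c3 k 2)) * (m == i)%:R +
      x (gen (c3 k 2)) * y (gen (c3 k 1)) * tau' m i
  | None => \sum_(k < 3) \sum_(l : I)
      (x (quad k l) * y (gen k) * r k i l +
       x (gen k) * y (quad k l) * \sum_(m : I) tau' m i * r k m l)
  end].

Lemma test_op_gen i x y a : test_op i x y (gen a) = 0.
Proof. by rewrite ffunE. Qed.

Lemma test_op_quad i x y k m : test_op i x y (quad k m) =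
  x (gen (c3 k 1)) * y (gen (c3 k 2)) * (m == i)%:R +
  x (gen (c3 k 2)) * y (gen (c3 k 1)) * tau' m i.
Proof. by rewrite ffunE. Qed.

Lemma test_op_top i x y : test_op i x y top = \sum_(k < 3) \sum_(l : I)
  (x (quad k l) * y (gen k) * r k i l +
   x (gen k) * y (quad k l) * \sum_(m : I) tau' m i * r k m l).
Proof. by rewrite ffunE. Qed.

Lemma scale_regular (a : K) (x : K^o) : a *: x = a * x.
Proof. by []. Qed.

Lemma test_spaceZ a (x : test_space) w : (a *: x) w = a * x w.
Proof. by rewrite ffunE. Qed.

Lemma test_op_bilinear : bilinear_op test_op.
Proof.
move=> i; split=> x a u v; apply/ffunP => -[[b|[k m]]|];
  rewrite !ffunE /= !scale_regular; try ring.
all: rewrite mulr_sumr -big_split; apply: eq_bigr => k _.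
all: rewrite mulr_sumr -big_split; apply: eq_bigr => l _.
all: by rewrite !ffunE /= !scale_regular; ring.
Qed.

Lemma test_op_equivariant : equivariant tau' test_op.
Proof.
move=> i x y; apply/ffunP => w; rewrite sum_ffunE.
under eq_bigr do rewrite test_spaceZ.
case: w => [[a|[k m]]|]; rewrite ffunE /=.
- by rewrite big1 // => n _; rewrite test_op_gen mulr0.
- under eq_bigr do rewrite test_op_quad mulrDr.
  rewrite big_split /= (bigD1 m) //= eqxx big1 ?addr0; last first.
    by move=> n; rewrite eq_sym => /negbTE->; rewrite !mulr0.
  rewrite -dual_tau_involutive mulr_sumr addrC.
  by congr (_ + _); [apply: eq_bigr => n _ | rewrite mulr1]; ring.
- under [RHS]eq_bigr do rewrite test_op_top mulr_sumr.
  rewrite [RHS]exchange_big /=; apply: eq_bigr => k _.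
  under [RHS]eq_bigr do rewrite mulr_sumr.
  rewrite [RHS]exchange_big /=; apply: eq_bigr => l _.
  under [RHS]eq_bigr do rewrite mulrDr.
  rewrite [RHS]big_split /= [RHS]addrC; congr (_ + _).
  + rewrite -{1}(sum_dual_tau2 (fun m => r k m l) i) mulr_sumr.
    by apply: eq_bigr => n _; ring.
  + by rewrite mulr_sumr; apply: eq_bigr => n _; ring.
Qed.

Definition even_monomial (x : 'I_3 -> test_space) (k k' : 'I_3) : K :=
  x (c3 k 1) (gen (c3 k' 1)) * x (c3 k 2) (gen (c3 k' 2)) * x k (gen k').
Definition odd_monomial (x : 'I_3 -> test_space) (k k' : 'I_3) : K :=
  x (c3 k 1) (gen (c3 k' 2)) * x (c3 k 2) (gen (c3 k' 1)) * x k (gen k').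
Definition even_pairing (d : F3 K I) (k k' : 'I_3) : K :=
  \sum_i \sum_j d k i j * r k' i j.
Definition odd_pairing (d : F3 K I) (k k' : 'I_3) : K :=
  \sum_i \sum_j \sum_l d k i j * tau' l j * r k' i l.

Lemma eval3_test_op_top d x : eval3 test_op d x top =
  \sum_k \sum_k' (even_monomial x k k' * even_pairing d k k' +
                  odd_monomial x k k' * odd_pairing d k k').
Proof.
rewrite /eval3 sum_ffunE; apply: eq_bigr => k _.
transitivity (\sum_i \sum_j \sum_k' (even_monomial x k k' * (d k i j * r k' i j) +
    odd_monomial x k k' * \sum_l d k i j * tau' l j * r k' i l)).
  rewrite sum_ffunE; apply: eq_bigr => i _.
  rewrite sum_ffunE; apply: eq_bigr => j _.
  rewrite test_spaceZ test_op_top mulr_sumr; apply: eq_bigr => k' _.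
  transitivity (\sum_l
      ((j == l)%:R * (even_monomial x k k' * (d k i j * r k' i l)) +
       odd_monomial x k k' * (d k i j * tau' l j * r k' i l))).
    rewrite mulr_sumr; apply: eq_bigr => l _.
    rewrite test_op_quad test_op_gen eq_sym /even_monomial /odd_monomial; ring.
  by rewrite big_split /= sum_kronecker mulr_sumr.
under eq_bigr do rewrite exchange_big.
rewrite exchange_big; apply: eq_bigr => k' _ /=.
rewrite /even_pairing /odd_pairing !mulr_sumr -big_split; apply: eq_bigr => i _.
by rewrite !mulr_sumr -big_split.
Qed.

Definition delta (u : test_basis) : test_space := [ffun w => (w == u)%:R].

Lemma deltaE u w : delta u w = (w == u)%:R.
Proof. exact: ffunE. Qed.

Lemma lin_form_coord (w : test_basis) : lin_form (fun x : test_space => x w).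
Proof. by move=> a u v; rewrite !ffunE. Qed.

Lemma gen_eq (a b : 'I_3) : (gen a == gen b) = (a == b).
Proof. by apply/eqP/eqP => [[]|->]. Qed.

Lemma test_op_delta12 i k m :
  test_op i (delta (gen (c3 k 1))) (delta (gen (c3 k 2))) (quad k m) = (m == i)%:R.
Proof.
rewrite test_op_quad !deltaE !gen_eq !eqxx (eq_sym (c3 k 1)) c3_21 eq_sym /=.
by rewrite mulr1n mulr0n; ring.
Qed.

Lemma test_op_delta21 i k m :
  test_op i (delta (gen (c3 k 2))) (delta (gen (c3 k 1))) (quad k m) = tau' m i.
Proof.
rewrite test_op_quad !deltaE !gen_eq !eqxx (eq_sym (c3 k 1)) c3_21 /=.
by rewrite mulr1n mulr0n; ring.
Qed.

Lemma test_op_delta_top k i i' :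
  test_op i (test_op i' (delta (gen (c3 k 1))) (delta (gen (c3 k 2))))
    (delta (gen k)) top = r k i i'.
Proof.
rewrite test_op_top (bigD1 k) //= [X in _ + X]big1 ?addr0; last first.
  move=> k' ne_k'k; apply: big1 => l _.
  by rewrite test_op_gen deltaE gen_eq (negbTE ne_k'k) /= mulr0n; ring.
rewrite -[RHS](sum_kronecker (r k i) i'); apply: eq_bigr => l _.
rewrite test_op_gen test_op_delta12 deltaE eqxx eq_sym /=.
by rewrite mulr1n; ring.
Qed.

Section Relations.
Variable R : F3 K I -> Prop.
Hypothesis R_act : forall s c, R c -> R (act3 tauV s c).
Hypothesis Rr : R r.
Variable d : F3 K I.
Hypothesis perp_d : perp R d.

(* Grouping the pairs (k, k') along rotations k' = k + t, resp. reflections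
   k' = t - k, makes the monomial independent of k and leaves the pairing of
   d with an S_3-translate of r. *)
Lemma even_part_eq0 x :
  \sum_k \sum_k' even_monomial x k k' * even_pairing d k k' = 0.
Proof.
transitivity (\sum_k \sum_(t < 3)
    even_monomial x k (c3 k t) * even_pairing d k (c3 k t)).
  by apply: eq_bigr => k _; apply: (reindex_inj (@c3_inj k)).
rewrite exchange_big /=; apply: big1 => t _.
transitivity (even_monomial x (inord 0) (c3 (inord 0) t) *
    \sum_k even_pairing d k (c3 k t)).
  rewrite mulr_sumr; apply: eq_bigr => k _; congr (_ * _); rewrite /even_monomial.
  by case: (ord3P k) => ->; case: (ord3P t) => ->;
    rewrite !(c3_inord, inordK) //=; ring.
suff -> : \sum_k even_pairing d k (c3 k t) = 0 by rewrite mulr0.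
rewrite -[RHS](perp_d (R_act (rot3 t) Rr)); apply: eq_bigr => k _.
by do 2!apply: eq_bigr => ? _; rewrite act3_rot3 mulrC.
Qed.

Lemma odd_part_eq0 x :
  \sum_k \sum_k' odd_monomial x k k' * odd_pairing d k k' = 0.
Proof.
transitivity (\sum_k \sum_(t < 3)
    odd_monomial x k (c3 t (2 * k)) * odd_pairing d k (c3 t (2 * k))).
  by apply: eq_bigr => k _; apply: (reindex_inj (@c3_rot_inj k)).
rewrite exchange_big /=; apply: big1 => t _.
transitivity (odd_monomial x (inord 0) (c3 t 0) *
    \sum_k odd_pairing d k (c3 t (2 * k))).
  rewrite mulr_sumr; apply: eq_bigr => k _; congr (_ * _); rewrite /odd_monomial.
  by case: (ord3P k) => ->; case: (ord3P t) => ->;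
    rewrite !(c3_inord, inordK) //=; ring.
suff -> : \sum_k odd_pairing d k (c3 t (2 * k)) = 0 by rewrite mulr0.
rewrite -[RHS]oppr0 -[X in _ = - X](perp_d (R_act (refl3 t) Rr)) -sumrN.
apply: eq_bigr => k _.
rewrite -sumrN; apply: eq_bigr => i _; rewrite -sumrN; apply: eq_bigr => j _.
rewrite act3_refl3 mulr_suml -sumrN.
by apply: eq_bigr => l _; rewrite /dual_tau; ring.
Qed.

Lemma test_op_relations x : eval3 test_op d x = 0.
Proof.
apply/ffunP => -[[a|[k m]]|]; rewrite ffunE; last first.
  rewrite eval3_test_op_top; under eq_bigr do rewrite big_split.
  by rewrite big_split /= even_part_eq0 odd_part_eq0 addr0.
all: rewrite /eval3 sum_ffunE; apply: big1 => k' _; rewrite sum_ffunE.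
all: apply: big1 => i _; rewrite sum_ffunE; apply: big1 => j _.
all: by rewrite test_spaceZ ?test_op_quad !test_op_gen; ring.
Qed.

End Relations.

End TestAlgebra.

Arguments delta {K I}.
Arguments lin_form_coord {K I}.

Section Backward.
Variables (K : fieldType) (I J : finType) (tauV : I -> I -> K) (tauW : J -> J -> K).
Hypothesis hV : involutive_mx tauV.
Variables (R : F3 K I -> Prop) (S : F3 K J -> Prop).
Hypothesis hR : is_relation_space tauV R.
Variables (A : lmodType K) (opA : I * J -> A -> A -> A).
Hypothesis tensor_alg : forall (B : lmodType K) (opB : I -> B -> B -> B),
  is_algebra (dual_tau tauV) (perp R) opB -> is_tensor_Q_algebra tauW S opB opA.

Local Notation tau' := (dual_tau tauV).
Local Notation test_space := (test_space K I).

Lemma test_algebra r : R r -> is_algebra tau' (perp R) (test_op tauV r).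
Proof.
case: hR => _ _ R_act Rr; split.
- exact: test_op_bilinear.
- exact: test_op_equivariant.
- by move=> d perp_d x; apply: (test_op_relations R_act Rr perp_d).
Qed.

Lemma tensor_swap_quad m j x y :
  \sum_i tau' m i *: opA (i, j) y x = \sum_l tauW l j *: opA (m, l) x y.
Proof.
have [R0 _ _] := hR; pose k : 'I_3 := inord 0.
pose t1 : tens test_space A := [:: (delta (gen I (c3 k 1)), x)].
pose t2 : tens test_space A := [:: (delta (gen I (c3 k 2)), y)].
have /teqP/(_ _ (lin_form_coord (quad k m))) :=
  (tensor_alg (test_algebra R0)).1 j t1 t2.
rewrite contract_bigcat {1}/contract big_tmul !big_seq1 /=.
under eq_bigr do rewrite test_op_delta21.
move->; apply: eq_bigr => l _.
rewrite (contract_tscale (lin_form_coord _)) /contract big_tmul !big_seq1 /=.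
by under eq_bigr do rewrite test_op_delta12; rewrite sum_kroneckerZ.
Qed.

Lemma black_equivariant : equivariant (black_tau tauV tauW) opA.
Proof.
move=> [i1 j] x y.
transitivity (\sum_m tau' i1 m *: \sum_i tau' m i *: opA (i, j) y x).
  rewrite -[LHS](sum_kroneckerZ (fun i => opA (i, j) y x) i1).
  under [RHS]eq_bigr do rewrite scaler_sumr.
  rewrite [RHS]exchange_big /=; apply: eq_bigr => i _.
  rewrite -(dual_tau_involutive hV) scaler_suml.
  by apply: eq_bigr => m _; rewrite scalerA.
under eq_bigr do rewrite tensor_swap_quad scaler_sumr.
rewrite pair_bigA; apply: eq_bigr => -[m l] _ /=.
by rewrite scalerA /black_tau /dual_tau /=; congr (_ *: _); ring.
Qed.

Lemma black_relations d : black_rel R S d -> forall a, eval3 opA d a = 0.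
Proof.
move=> [r [s [Rr Ss d_eq]]] a.
pose t m : tens test_space A := [:: (delta (gen I m), a m)].
have := (tensor_alg (test_algebra Rr)).2 s Ss t _ (lin_form_coord (top I)).
rewrite -/(contract (fun x : test_space => x (top I)) _).
rewrite (contract_teval _ _ (lin_form_coord _)) /t !big_seq1 /= => <-.
rewrite /eval3; apply: eq_bigr => k _; apply: eq_bigr => p _; apply: eq_bigr => q _.
rewrite /black3 /coef3 /= !(pick3_ord (fun m => (delta (gen I m), a m))) /=.
by rewrite test_op_delta_top d_eq.
Qed.

End Backward.

Theorem mainTheorem3 (K : fieldType) (I J : finType)
  (tauV : I -> I -> K) (tauW : J -> J -> K)
  (R : F3 K I -> Prop) (S : F3 K J -> Prop)
  (hV : involutive_mx tauV) (hW : involutive_mx tauW)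
  (hR : is_relation_space tauV R) (hS : is_relation_space tauW S)
  (A : lmodType K) (opA : I * J -> A -> A -> A) (hA : bilinear_op opA) :
  is_algebra (black_tau tauV tauW) (black_rel R S) opA <->
  (forall (B : lmodType K) (opB : I -> B -> B -> B),
      is_algebra (dual_tau tauV) (perp R) opB ->
      is_tensor_Q_algebra tauW S opB opA).
Proof.
split=> [[_ eqA relA] B opB [_ eqB relB] | tensor_alg].
- have [R0 R_lin _] := hR; split.
  + exact: tensor_equivariant hV eqB eqA.
  + exact: tensor_relations (perp_perp R0 R_lin) relB relA.
- split; first exact: hA.
  + exact: (black_equivariant hV hR tensor_alg).
  + exact: (black_relations hV hR tensor_alg).
Qed.
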